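(* Let $a\geq 3$ and $m\geq 2a^2-a+2$ be integers. Every 2-coloring of $[C(m,a)]$ (with colors red and blue) in which $a-2$ is red and $a-1$ is blue admits a monochromatic solution of $L(m,a)$ in $[C(m,a)]$.
   Context: For integers $m\geq 3$, $a\geq 1$, $L(m,a)$ denotes the equation $x_1+x_2+\cdots+x_{m-1}=a x_m$. For a positive integer $n$, $[n]=\{1,\dots,n\}$. A solution of $L(m,a)$ in $[n]$ is an $m$-tuple $(x_1,\dots,x_m)\in[n]^m$ (entries not necessarily distinct) satisfying the equation; given a 2-coloring of $[n]$, it is monochromatic if all $x_i$ have the same color. $C(m,a)$ denotes $\left\lceil \frac{m-1}{a}\left\lceil \frac{m-1}{a}\right\rceil\right\rceil$. *)

From mathcomp Require Import all_boot.
Set Implicit Arguments. Unset Strict Implicit. Unset Printing Implicit Defensive.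

Definition ceil_div (p q : nat) : nat := (p + q - 1) %/ q.

(* C(m,a) = ceil( (m-1)/a * ceil((m-1)/a) ) = ceil( (m-1)*ceil((m-1)/a) / a ) *)
Definition Cma (m a : nat) : nat := ceil_div ((m - 1) * ceil_div (m - 1) a) a.

(* A solution of L(m,a): x_1 + ... + x_{m-1} = a x_m, the tuple indexed by
   'I_m, with x_m being the last coordinate (index m-1). *)
Definition is_solution (m a : nat) (x : nat -> nat) : Prop :=
  \sum_(0 <= i < m.-1) x i = a * x m.-1.

Definition in_range (n m : nat) (x : nat -> nat) : Prop :=
  forall i, i < m -> 1 <= x i <= n.

(* monochromatic w.r.t. coloring col : nat -> bool (true = red, false = blue) *)
Definition monochromatic (col : nat -> bool) (m : nat) (x : nat -> nat) : Prop :=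
  forall i, i < m -> col (x i) = col (x 0).

From mathcomp Require Import all_boot.
From mathcomp Require Import zify.

(* Among a-2 and a-1 exactly one number e is even; call the
   other one o.  They have different colours.  Write m - 1 = a + w.  Each of
   the three multisets
     (1) e+w copies of e,     a-e copies of e+w,
     (2) e/2+w copies of e,   a-e/2 copies of e+2w,
     (3) w copies of o, o copies of e+w, a-o copies of e+2w,
   has a + w = m - 1 summands adding up to a times its largest value, so it
   yields a solution of L(m,a) whose last entry is that largest value.  If
   e+w or e+2w has the colour of e, (1) or (2) is monochromatic; otherwise
   e+w and e+2w both have the colour of o and (3) is monochromatic.  All
   values are at most e + 2w <= 2(m-1), and 2(m-1) <= C(m,a) precisely
   because m >= 2a^2 - a + 2. *)

Definition mono_list_solution (col : nat -> bool) (a n k : nat)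
    (s : seq nat) (z : nat) : Prop :=
  [/\ size s = k, sumn s = a * z, all (fun y => 0 < y <= n) (z :: s)
    & all (fun y => col y == col z) s].

(* Reading the list with default value z gives the tuple (s_1, ..., s_k, z). *)
Lemma solution_of_list (col : nat -> bool) (a n m : nat) (s : seq nat) (z : nat) :
  0 < m -> mono_list_solution col a n m.-1 s z ->
  exists x : nat -> nat,
    in_range n m x /\ is_solution m a x /\ monochromatic col m x.
Proof.
move=> m_gt0 [size_s sum_s /andP[z_rng s_rng] s_col].
have x_last : nth z s m.-1 = z by rewrite nth_default // size_s.
have x_rng i : 1 <= nth z s i <= n.
  case: (ltnP i (size s)) => [i_lt|i_ge]; last by rewrite nth_default.
  by apply: (allP s_rng); rewrite mem_nth.
have x_col i : col (nth z s i) = col z.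
  case: (ltnP i (size s)) => [i_lt|i_ge]; last by rewrite nth_default.
  by apply/eqP; apply: (allP s_col); rewrite mem_nth.
exists (nth z s); split; [by move=> i _; exact: x_rng | split].
- by rewrite /is_solution x_last -size_s -sum_s sumnE [RHS](big_nth z).
- by move=> i _; rewrite !x_col.
Qed.

Lemma all_nseq_in (P : pred nat) (c y : nat) : P y -> all P (nseq c y).
Proof. by move=> Py; rewrite all_nseq Py orbT. Qed.

Section Trichotomy.

Variables (col : nat -> bool) (a w e o n : nat).
Hypotheses (e_even : ~~ odd e) (e_gt0 : 0 < e) (o_gt0 : 0 < o).
Hypotheses (e_le_a : e <= a) (o_le_a : o <= a) (n_bound : a + 2 * w <= n).
Hypothesis col_eo : col e != col o.

Let e_half : e = e./2 * 2.
Proof. by rewrite -[LHS]odd_double_half (negbTE e_even) add0n muln2. Qed.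

Lemma solution_e_ew :
  col (e + w) = col e ->
  mono_list_solution col a n (a + w) (nseq (e + w) e ++ nseq (a - e) (e + w)) (e + w).
Proof.
move=> col_ew; split.
- by rewrite size_cat !size_nseq; lia.
- by rewrite sumn_cat !sumn_nseq; nia.
- by rewrite /= all_cat !all_nseq_in /=; lia.
- by rewrite all_cat !all_nseq_in ?col_ew.
Qed.

Lemma solution_e_e2w :
  col (e + 2 * w) = col e ->
  mono_list_solution col a n (a + w)
    (nseq (e./2 + w) e ++ nseq (a - e./2) (e + 2 * w)) (e + 2 * w).
Proof.
move=> col_e2w; split.
- by rewrite size_cat !size_nseq; lia.
- rewrite sumn_cat !sumn_nseq; move: e_half; set h := e./2 => e_eq.
  by rewrite e_eq; nia.
- by rewrite /= all_cat !all_nseq_in /=; lia.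
- by rewrite all_cat !all_nseq_in ?col_e2w.
Qed.

Lemma solution_o_ew_e2w :
  col (e + w) = col o -> col (e + 2 * w) = col o ->
  mono_list_solution col a n (a + w)
    (nseq w o ++ nseq o (e + w) ++ nseq (a - o) (e + 2 * w)) (e + 2 * w).
Proof.
move=> col_ew col_e2w; split.
- by rewrite !size_cat !size_nseq; lia.
- rewrite !sumn_cat !sumn_nseq -[in RHS](subnK o_le_a).
  by set d := a - o; nia.
- by rewrite /= !all_cat !all_nseq_in /=; lia.
- by rewrite !all_cat !all_nseq_in ?col_ew ?col_e2w.
Qed.

(* Since col takes only two values, one of the three multisets works. *)
Lemma mono_solution_exists :
  exists s z, mono_list_solution col a n (a + w) s z.
Proof.
have col_o : col o = ~~ col e by move: col_eo; case: (col e); case: (col o).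
case: (boolP (col (e + w) == col e)) => [/eqP/solution_e_ew sol|ew_ne].
  by do 2 eexists; exact: sol.
case: (boolP (col (e + 2 * w) == col e)) => [/eqP/solution_e_e2w sol|e2w_ne].
  by do 2 eexists; exact: sol.
have flip (y : nat) : col y != col e -> col y = col o.
  by rewrite col_o; case: (col y); case: (col e).
by do 2 eexists; apply: solution_o_ew_e2w; apply: flip.
Qed.

End Trichotomy.

(* The hypothesis m >= 2a^2 - a + 2 makes C(m,a) at least 2(m-1):
   first ceil((m-1)/a) >= 2a, then C(m,a) >= ceil((m-1) 2a / a). *)
Lemma ceil_div_ge (k p q : nat) : 0 < q -> k * q <= p + q - 1 -> k <= ceil_div p q.
Proof. by move=> q_gt0 le_kq; rewrite /ceil_div leq_divRL. Qed.

Lemma Cma_lower_bound (a m : nat) :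
  1 <= a -> 2 * a ^ 2 - a + 2 <= m -> 2 * m.-1 <= Cma m a.
Proof.
move=> a_gt0 m_ge; have sq_a : a ^ 2 = a * a by rewrite expnS expn1.
have ceil_ge : 2 * a <= ceil_div (m - 1) a by apply: ceil_div_ge; nia.
by apply: ceil_div_ge => //; nia.
Qed.

Lemma even_and_other_colour (col : nat -> bool) (a : nat) :
  3 <= a -> col (a - 2) = true -> col (a - 1) = false ->
  exists e o, [/\ ~~ odd e, 0 < e <= a, 0 < o <= a & col e != col o].
Proof.
move=> a_ge3 col_red col_blue; case: (boolP (odd a)) => odd_a.
- exists (a - 1), (a - 2); rewrite col_red col_blue.
  by split; rewrite ?oddB ?odd_a //; lia.
- exists (a - 2), (a - 1); rewrite col_red col_blue.
  by split; rewrite ?oddB ?(negbTE odd_a) //; lia.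
Qed.

Theorem proposition2 (a m : nat) (col : nat -> bool) :
  3 <= a -> 2 * a ^ 2 - a + 2 <= m ->
  col (a - 2) = true -> col (a - 1) = false ->
  exists x : nat -> nat,
    in_range (Cma m a) m x /\ is_solution m a x /\ monochromatic col m x.
Proof.
move=> a_ge3 m_ge col_red col_blue.
have sq_a : a ^ 2 = a * a by rewrite expnS expn1.
have m_split : m.-1 = a + (m.-1 - a) by nia.
have n_ge := Cma_lower_bound a m (ltnW (ltnW a_ge3)) m_ge.
have [e [o [e_even /andP[e_gt0 e_le] /andP[o_gt0 o_le] col_eo]]] :=
  even_and_other_colour col a a_ge3 col_red col_blue.
have n_bound : a + 2 * (m.-1 - a) <= Cma m a by lia.
have [s [z sol]] := mono_solution_exists col a (m.-1 - a) e o (Cma m a)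
  e_even e_gt0 o_gt0 e_le o_le n_bound col_eo.
by apply: (solution_of_list col a (Cma m a) m s z); [lia | rewrite m_split].
Qed.
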